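(* Let $X,Y$ be Banach spaces, $F:D(F)\subseteq X\to Y$ a weakly sequentially continuous (nonlinear) operator whose domain $D(F)$ is closed and convex, and let $y\in Y$ be such that $F(x)=y$ has a unique solution $x^\dagger\in D(F)$. Let $V$ be a Banach space continuously embedded in $X$, with strictly finer topology, such that sub-level sets of $\|\cdot\|_V^m$ are weakly sequentially pre-compact in $X$. Fix $\nu,m\ge1$, $\delta_{\max}>0$ (sufficiently small) and $C_{DP}>1$. For $\delta\in(0,\delta_{\max}]$ and $y^\delta\in Y$ with $\|y^\delta-y\|_Y\le\delta$, consider minimizers over $D(F)\cap V$ of $T^\delta_\kappa(x)=\|F(x)-y^\delta\|_Y^\nu+\kappa\|x\|_V^m$, and assume that for every such $\delta,y^\delta$ there are $\kappa_{DP}>0$ and a minimizer $x^\delta_{\kappa_{DP}}$ of $T^\delta_{\kappa_{DP}}$ with $\|F(x^\delta_{\kappa_{DP}})-y^\delta\|_Y=C_{DP}\delta$. Assume: (A1) There are a Banach space $U\supsetneq X$ and constants $0<c_U\le C_U<\infty$ with $c_U\|x-x^\dagger\|_U\le\|F(x)-F(x^\dagger)\|_Y\le C_U\|x-x^\dagger\|_U$ for all $x\in D(F)$, and a neighborhood $B^\dagger\subset X$ of $x^\dagger$ such that $F$ is continuous on $B^\dagger\cap D(F)$. (A2) There are a family of Banach spaces $\{X_s\}_{s\in[0,1]}$, a number $t_0\in(0,\infty)$ and operators $\{P_t\}_{0<t\le t_0}\subset B(U)$ such that: (i) the embeddings $V\hookrightarrow X\hookrightarrow U$ are continuous; (ii)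 $X_0=X$, $X_1=V$, and $X_s\hookrightarrow X_t$ continuously for $0\le t\le s\le1$; (iii) there is $a\ge0$ such that for all $s\in(0,1]$ and $r\in[0,s)$ there is $L>0$ with $\|x\|_{X_r}\le L\|x\|_{X_s}^{\frac{r+a}{a+s}}\|x\|_U^{\frac{s-r}{a+s}}$ for all $x\in X_s$; (iv) for all $s\in[0,1]$ and $t\in(0,t_0]$, $P_tX_s\subset X_s$ and $C_P:=\sup_{0<t\le t_0}\|P_t\|_{X_s\to X_s}<\infty$, and for every $x\in X$ the map $t\mapsto P_tx$ is continuous from $(0,t_0]$ into $X$; (v) for every $0<s<1$ there is $C_{Proj}\ge C_P+1$ such that for all $0<t\le t_0$: $\|P_t-\mathrm{id}\|_{X_s\to U}\le C_{Proj}t^{a+s}$ and $\|P_t\|_{X_s\to V}\le C_{Proj}t^{s-1}$, with $a$ as in (iii). (A3) There are $\theta\in(0,1)$ and $E>0$ with $x^\dagger\in X_\theta$ and $\|x^\dagger\|_{X_\theta}\le E$, and either $x^\dagger$ is an interior point of $D(F)$ or $P_tx^\dagger\in D(F)$ for all $0<t\le t_0$. Then there is a constant $c>0$, independent of $\delta$, such that $\|x^\delta_{\kappa_{DP}}-x^\dagger\|_X\le c\,\delta^{\frac{\theta}{a+\theta}}$ for all sufficiently small $\delta$. *)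

From HB Require Import structures.
From mathcomp Require Import all_boot all_order all_algebra.
From mathcomp Require Import all_classical all_reals all_analysis.
Set Implicit Arguments. Unset Strict Implicit. Unset Printing Implicit Defensive.
Import Order.TTheory GRing.Theory Num.Theory.
Import numFieldNormedType.Exports.
Local Open Scope classical_set_scope.
Local Open Scope ring_scope.

(* All Banach spaces X_s (s in [0,1]) are modelled as linear subspaces S of
   the ambient Banach space U, equipped with their own norm n : U -> R.  *)

Section Defs.
Context {R : realType}.

Definition lin_subspace (E : lmodType R) (S : set E) : Prop :=
  S 0 /\ forall (a b : R) (x y : E), S x -> S y -> S (a *: x + b *: y).

Definition is_norm_on (E : lmodType R) (S : set E) (n : E -> R) : Prop :=
  (forall x, S x -> 0 <= n x) /\
  (forall x, S x -> n x = 0 -> x = 0) /\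
  (forall (a : R) x, S x -> n (a *: x) = `|a| * n x) /\
  (forall x y, S x -> S y -> n (x + y) <= n x + n y).

Definition banach_sub (E : lmodType R) (S : set E) (n : E -> R) : Prop :=
  lin_subspace S /\ is_norm_on S n /\
  forall u : nat -> E, (forall k, S (u k)) ->
    (forall e : R, 0 < e -> exists N : nat, forall i j : nat, (N <= i)%N -> (N <= j)%N ->
        n (u i - u j) < e) ->
    exists2 x, S x & (fun k => n (u k - x)) @ \oo --> (0 : R).

Definition bdd_lin_functional (E : lmodType R) (S : set E) (n : E -> R)
  (f : E -> R) : Prop :=
  (forall (a b : R) x y, S x -> S y -> f (a *: x + b *: y) = a * f x + b * f y) /\
  exists C : R, forall x, S x -> `|f x| <= C * n x.

Definition weak_cvg (E : lmodType R) (S : set E) (n : E -> R)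
  (u : nat -> E) (x : E) : Prop :=
  forall f, bdd_lin_functional S n f -> (fun k => f (u k)) @ \oo --> f x.

Definition tikhonov (U Y : normedModType R) (F : U -> Y) (nV : U -> R)
  (nu m kappa : R) (ydelta : Y) (x : U) : R :=
  powR `|F x - ydelta| nu + kappa * powR (nV x) m.

Definition is_minimizer (U Y : normedModType R) (F : U -> Y) (D V : set U)
  (nV : U -> R) (nu m kappa : R) (ydelta : Y) (x : U) : Prop :=
  D x /\ V x /\
  forall z, D z -> V z ->
    tikhonov F nV nu m kappa ydelta x <= tikhonov F nV nu m kappa ydelta z.

End Defs.

From HB Require Import structures.
From mathcomp Require Import all_boot all_order all_algebra.
From mathcomp Require Import all_classical all_reals all_analysis.
From mathcomp Require Import ring lra.
Set Implicit Arguments. Unset Strict Implicit. Unset Printing Implicit Defensive.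
Import Order.TTheory GRing.Theory Num.Theory.
Import numFieldNormedType.Exports.
Local Open Scope classical_set_scope.
Local Open Scope ring_scope.

(* Compare the discrepancy-principle minimizer x with the smoothed exact solution
   z = P_t x^dagger at the scale t^(a + theta) ~ delta.  By (A2)(v) and (A1), z is
   within O(delta) of the data and, for the right constant, satisfies the
   discrepancy principle itself; minimality of x then gives
   ||x||_V <= ||z||_V = O(t^(theta - 1)).  By (A1) both x and z are O(t^(a + theta))
   from x^dagger in U, so interpolating (A2)(iii) between V and U bounds
   ||x - z||_X by O(t^theta); interpolating between X_theta and U bounds
   ||z - x^dagger||_X likewise.  Finally t^theta ~ delta^(theta / (a + theta)). *)

Section PowR.
Variable R : realType.
Implicit Types x y p : R.

Lemma ler_powR2r x y p : 0 <= p -> 0 <= x <= y -> x `^ p <= y `^ p.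
Proof.
move=> p0 /andP[x0 xy]; apply: ge0_ler_powR; rewrite ?nnegrE //.
exact: le_trans xy.
Qed.

Lemma le_of_powR_le x y p : 0 < p -> 0 <= x -> 0 <= y -> x `^ p <= y `^ p -> x <= y.
Proof.
move=> p0 x0 y0 xy; rewrite leNgt; apply/negP => /gt0_ltr_powR yx.
by move: xy; rewrite leNgt yx ?nnegrE.
Qed.

Lemma powRVK x p : 0 <= x -> p != 0 -> (x `^ p^-1) `^ p = x.
Proof. by move=> x0 p0; rewrite -powRrM mulVf // powRr1. Qed.

Lemma powR_small_near0 (M r e t0 : R) : 0 < M -> 0 < r -> 0 < e -> 0 < t0 ->
  exists2 t1, 0 < t1 <= t0 & forall t, 0 < t <= t1 -> M * t `^ e < r.
Proof.
move=> M0 r0 e0 t00; pose s := (r / (2 * M)) `^ e^-1.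
have s0 : 0 < s by apply: powR_gt0; rewrite divr_gt0 ?mulr_gt0.
exists (Num.min t0 s); first by rewrite lt_min t00 s0 ge_min lexx.
move=> t /andP[t_gt0]; rewrite le_min => /andP[_ ts].
have : t `^ e <= r / (2 * M).
  have rM0 : 0 <= r / (2 * M) by rewrite ltW // divr_gt0 // mulr_gt0.
  rewrite -(powRVK rM0 (_ : e != 0)) ?gt_eqF //.
  by apply: ler_powR2r; rewrite ?(ltW e0) ?(ltW t_gt0).
rewrite -(ler_pM2l M0) => /le_lt_trans; apply.
have -> : M * (r / (2 * M)) = r / 2 by field; rewrite gt_eqF.
lra.
Qed.

(* Applied to the interpolation inequality (A2)(iii) with r = 0: the exponents
   are such that the rates t^(theta - s) and t^(a + theta) combine to t^theta. *)
Lemma interp_rate (a s theta L A B t nX nS nU : R) :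
  0 <= a -> 0 < s -> 0 < t -> 0 <= L ->
  0 <= nS <= A * t `^ (theta - s) -> 0 <= nU <= B * t `^ (a + theta) ->
  nX <= L * nS `^ (a / (a + s)) * nU `^ (s / (a + s)) ->
  nX <= L * A `^ (a / (a + s)) * B `^ (s / (a + s)) * t `^ theta.
Proof.
move=> a0 s0 t0 L0 /andP[nS0 nSA] /andP[nU0 nUB] /le_trans; apply.
have as0 : 0 < a + s by rewrite ltr_wpDl.
have A0 : 0 <= A by rewrite -(pmulr_lge0 _ (powR_gt0 (theta - s) t0)) (le_trans nS0).
have B0 : 0 <= B by rewrite -(pmulr_lge0 _ (powR_gt0 (a + theta) t0)) (le_trans nU0).
have exp_theta : (theta - s) * (a / (a + s)) + (a + theta) * (s / (a + s)) = theta.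
  by field; rewrite gt_eqF.
have -> : L * A `^ (a / (a + s)) * B `^ (s / (a + s)) * t `^ theta =
    L * (A * t `^ (theta - s)) `^ (a / (a + s)) * (B * t `^ (a + theta)) `^ (s / (a + s)).
  rewrite !powRM ?powR_ge0 // -!powRrM -[in t `^ theta]exp_theta powRD ?(gt_eqF t0) ?implybT //.
  ring.
apply: ler_pM; rewrite ?mulr_ge0 ?powR_ge0 //.
  by apply: ler_wpM2l => //; apply: ler_powR2r; rewrite ?divr_ge0 ?nS0 ?(ltW as0).
by apply: ler_powR2r; rewrite ?divr_ge0 ?nU0 ?(ltW s0) ?(ltW as0).
Qed.

End PowR.

Section NormedSubspace.
Context {R : realType} {E : lmodType R} (S : set E) (n : E -> R).
Hypotheses (HS : lin_subspace S) (Hn : is_norm_on S n).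

Lemma lin_subspaceB x z : S x -> S z -> S (x - z).
Proof. by case: HS => _ lin Sx Sz; have := lin 1 (-1) x z Sx Sz; rewrite scale1r scaleN1r. Qed.

Lemma lin_subspaceN x : S x -> S (- x).
Proof. by move=> Sx; rewrite -sub0r; apply: lin_subspaceB => //; case: HS. Qed.

Lemma norm_on_ge0 x : S x -> 0 <= n x.
Proof. by case: Hn => ge0 _; apply: ge0. Qed.

Lemma norm_onD x z : S x -> S z -> n (x + z) <= n x + n z.
Proof. by case: Hn => _ [_ [_ tri]]; apply: tri. Qed.

Lemma norm_onN x : S x -> n (- x) = n x.
Proof. by case: Hn => _ [_ [hom _]] Sx; rewrite -scaleN1r hom // normrN normr1 mul1r. Qed.

Lemma norm_onB x z : S x -> S z -> n (x - z) <= n x + n z.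
Proof. by move=> Sx Sz; rewrite -(norm_onN Sz); apply: norm_onD => //; apply: lin_subspaceN. Qed.

End NormedSubspace.

Lemma minimizer_penalty_le (R : realType) (U Y : normedModType R) (F : U -> Y)
    (D V : set U) (nV : U -> R) (nu m kappa : R) (ydelta : Y) (x z : U) :
  0 <= nu -> 0 < m -> 0 < kappa -> (forall v, V v -> 0 <= nV v) ->
  is_minimizer F D V nV nu m kappa ydelta x -> D z -> V z ->
  `|F z - ydelta| <= `|F x - ydelta| -> nV x <= nV z.
Proof.
move=> nu0 m0 kappa0 nV0 [_ [Vx xmin]] Dz Vz res_le.
have res_pow : `|F z - ydelta| `^ nu <= `|F x - ydelta| `^ nu.
  by apply: ler_powR2r; rewrite ?normr_ge0.
have pen_le : nV x `^ m <= nV z `^ m.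
  rewrite -(ler_pM2l kappa0) -(lerD2l (`|F x - ydelta| `^ nu)).
  apply: le_trans (xmin z Dz Vz) _.
  by rewrite /tikhonov lerD2r.
exact: le_of_powR_le m0 (nV0 _ Vx) (nV0 _ Vz) pen_le.
Qed.

Section DiscrepancyRate.
Variables (R : realType) (U Y : normedModType R) (X V D : set U) (nX nV : U -> R).
Variables (F : U -> Y) (y : Y) (xdag : U) (nu m CDP cU CU a theta L : R).
Variables (z : R -> U) (t0 t1 MV MU MX : R).
Hypotheses (HX : lin_subspace X) (HnX : is_norm_on X nX).
Hypotheses (HV : lin_subspace V) (HnV : is_norm_on V nV).
Hypotheses (HDX : forall x, D x -> X x) (HXxdag : X xdag) (HFxdag : F xdag = y).
Hypothesis HA1 : forall x, D x ->
  cU * `|x - xdag| <= `|F x - F xdag| /\ `|F x - F xdag| <= CU * `|x - xdag|.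
Hypotheses (Hnu : 0 <= nu) (Hm : 0 < m) (HCDP : 1 < CDP) (HcU : 0 < cU) (HCU : 0 < CU).
Hypotheses (Ha : 0 <= a) (Htheta : 0 < theta) (HL : 0 <= L).
Hypothesis Hinterp : forall x, V x ->
  nX x <= L * nV x `^ (a / (a + 1)) * `|x| `^ (1 / (a + 1)).
Hypotheses (Ht1 : 0 < t1 <= t0) (HMU : 0 < MU) (HMX : 0 < MX).
Hypothesis HzD : forall t, 0 < t <= t1 -> D (z t).
Hypothesis HzV : forall t, 0 < t <= t0 -> V (z t) /\ nV (z t) <= MV * t `^ (theta - 1).
Hypothesis HzU : forall t, 0 < t <= t0 -> `|z t - xdag| <= MU * t `^ (a + theta).
Hypothesis HzX : forall t, 0 < t <= t0 -> nX (z t - xdag) <= MX * t `^ theta.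

Lemma residual_le_dist x ydelta delta : D x -> `|ydelta - y| <= delta ->
  `|F x - ydelta| <= CU * `|x - xdag| + delta.
Proof.
move=> Dx yd; rewrite -HFxdag in yd.
apply: le_trans (ler_distD (F xdag) _ _) _.
by apply: lerD; [exact: (HA1 Dx).2 | rewrite distrC].
Qed.

Lemma dist_le_residual x ydelta delta : D x -> `|ydelta - y| <= delta ->
  cU * `|x - xdag| <= `|F x - ydelta| + delta.
Proof.
move=> Dx yd; rewrite -HFxdag in yd.
apply: le_trans (HA1 Dx).1 _; apply: le_trans (ler_distD ydelta _ _) _.
by rewrite lerD2l.
Qed.

(* The scale t of the comparison element z t is tied to delta by
   t^(a + theta) = k delta, with k chosen so that CU MU t^(a + theta) = (CDP - 1) delta,
   i.e. z t satisfies the discrepancy principle. *)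
Let k := (CDP - 1) / (CU * MU).

Let k_gt0 : 0 < k.
Proof. by rewrite divr_gt0 ?mulr_gt0 // subr_gt0. Qed.

Let le_t0 t : 0 < t <= t1 -> 0 < t <= t0.
Proof. by case/andP: Ht1 => _ t1_le /andP[-> /le_trans]; apply. Qed.

Lemma approx_residual_le t delta ydelta : 0 < t <= t1 -> t `^ (a + theta) = k * delta ->
  `|ydelta - y| <= delta -> `|F (z t) - ydelta| <= CDP * delta.
Proof.
move=> ht tk yd; apply: le_trans (residual_le_dist (HzD ht) yd) _.
have := ler_wpM2l (ltW HCU) (HzU (le_t0 ht)).
have : CU * (MU * (k * delta)) = (CDP - 1) * delta.
  by rewrite /k; field; rewrite !gt_eqF.
rewrite tk; lra.
Qed.

Lemma minimizer_dist_le t delta ydelta x : t `^ (a + theta) = k * delta ->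
  `|ydelta - y| <= delta -> D x -> `|F x - ydelta| = CDP * delta ->
  `|x - xdag| <= (CDP + 1) / (cU * k) * t `^ (a + theta).
Proof.
move=> tk yd Dx res.
have -> : (CDP + 1) / (cU * k) * t `^ (a + theta) = cU^-1 * (CDP * delta + delta).
  by rewrite tk; field; rewrite !gt_eqF.
by rewrite ler_pdivlMl // -res; apply: dist_le_residual.
Qed.

Let c0 := L * (2 * MV) `^ (a / (a + 1)) * ((CDP + 1) / (cU * k) + MU) `^ (1 / (a + 1)) + MX.

Let c0_gt0 : 0 < c0.
Proof. by rewrite /c0 ltr_wpDl // !mulr_ge0 ?powR_ge0. Qed.

Lemma dp_minimizer_error_le t delta ydelta kappa x : 0 < t <= t1 -> t `^ (a + theta) = k * delta ->
  `|ydelta - y| <= delta -> 0 < kappa ->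
  is_minimizer F D V nV nu m kappa ydelta x -> `|F x - ydelta| = CDP * delta ->
  nX (x - xdag) <= c0 * t `^ theta.
Proof.
move=> /[dup] ht /andP[t_gt0 _] tk yd kappa0 xmin res; have [Dx [Vx _]] := xmin.
have [Vz nVz] := HzV (le_t0 ht).
have pen_le : nV x <= nV (z t).
  apply: minimizer_penalty_le Hnu Hm kappa0 (norm_on_ge0 HnV) xmin (HzD ht) Vz _.
  by rewrite res; apply: approx_residual_le yd.
have Vw : V (x - z t) by apply: lin_subspaceB.
have nVw : 0 <= nV (x - z t) <= 2 * MV * t `^ (theta - 1).
  rewrite (norm_on_ge0 HnV Vw) /=; apply: le_trans (norm_onB HV HnV Vx Vz) _.
  by rewrite -mulrA mulr_natl mulr2n; apply: lerD => //; apply: le_trans pen_le nVz.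
have nUw : 0 <= `|x - z t| <= ((CDP + 1) / (cU * k) + MU) * t `^ (a + theta).
  rewrite normr_ge0 /= (_ : x - z t = (x - xdag) - (z t - xdag)); last first.
    by rewrite opprB addrA subrK.
  apply: le_trans (ler_normB _ _) _; rewrite mulrDl.
  by apply: lerD; [exact: minimizer_dist_le tk yd Dx res | exact/HzU/le_t0].
have nXw := interp_rate Ha ltr01 t_gt0 HL nVw nUw (Hinterp Vw).
rewrite (_ : x - xdag = (x - z t) + (z t - xdag)); last by rewrite addrA subrK.
have Xz := HDX (HzD ht).
have Xw : X (x - z t) by apply: lin_subspaceB (HDX Dx) Xz.
apply: le_trans (norm_onD HnX Xw (lin_subspaceB HX Xz HXxdag)) _.
by rewrite /c0 mulrDl lerD // HzX // le_t0.
Qed.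

Lemma dp_minimizer_rate : exists2 c, 0 < c & exists2 delta1, 0 < delta1 &
  forall delta ydelta kappa x, 0 < delta <= delta1 -> `|ydelta - y| <= delta ->
    0 < kappa -> is_minimizer F D V nV nu m kappa ydelta x ->
    `|F x - ydelta| = CDP * delta ->
    nX (x - xdag) <= c * delta `^ (theta / (a + theta)).
Proof.
have at0 : 0 < a + theta by rewrite ltr_wpDl.
exists (c0 * k `^ (theta / (a + theta))); first by rewrite mulr_gt0 ?powR_gt0.
have /andP[t1_gt0 _] := Ht1.
exists (t1 `^ (a + theta) / k); first by rewrite divr_gt0 ?powR_gt0.
move=> delta ydelta kappa x /andP[delta0 delta_le] yd kappa0 xmin res.
have kd0 : 0 <= k * delta by rewrite mulr_ge0 // ltW.
pose t := (k * delta) `^ (a + theta)^-1.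
have tk : t `^ (a + theta) = k * delta by rewrite powRVK ?gt_eqF.
have ht : 0 < t <= t1.
  apply/andP; split; first exact: powR_gt0 (mulr_gt0 k_gt0 delta0).
  apply: (le_of_powR_le at0); rewrite ?powR_ge0 ?(ltW t1_gt0) //.
  by rewrite tk mulrC -ler_pdivlMr.
apply: le_trans (dp_minimizer_error_le ht tk yd kappa0 xmin res) _.
by rewrite /t -powRrM [_^-1 * _]mulrC (powRM _ (ltW k_gt0) (ltW delta0)) mulrA.
Qed.

End DiscrepancyRate.

Section SourceApproximation.
Variables (R : realType) (U : normedModType R) (X S V D : set U) (nX nS nV : U -> R).
Variables (P : R -> U -> U) (xdag : U) (t0 a theta L Cp E : R).
Hypotheses (HS : lin_subspace S) (HnS : is_norm_on S nS).
Hypotheses (Ha : 0 <= a) (Htheta : 0 < theta) (HL : 0 < L) (Ht0 : 0 < t0) (HE : 0 < E).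
Hypotheses (HxdagS : S xdag) (HxdagE : nS xdag <= E).
Hypothesis HPS : forall t, 0 < t <= t0 -> forall x, S x -> S (P t x).
Hypothesis HPnS : forall t, 0 < t <= t0 -> forall x, S x -> nS (P t x) <= (Cp - 1) * nS x.
Hypothesis HProj : forall t, 0 < t <= t0 -> forall x, S x ->
  `|P t x - x| <= Cp * t `^ (a + theta) * nS x /\
  V (P t x) /\ nV (P t x) <= Cp * t `^ (theta - 1) * nS x.
Hypothesis Hinterp : forall x, S x ->
  nX x <= L * nS x `^ (a / (a + theta)) * `|x| `^ (theta / (a + theta)).

(* The hypotheses do not force [Cp >= 0], hence the nonnegative substitute [K]. *)
Let K := Num.max Cp 1.

Let KE_gt0 : 0 < K * E.
Proof. by rewrite mulr_gt0 // lt_max ltr01 orbT. Qed.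

Let Cp_le p : 0 <= p -> Cp * p * nS xdag <= K * E * p.
Proof.
move=> p0; rewrite mulrAC; apply: ler_wpM2r => //.
have nS0 := norm_on_ge0 HnS HxdagS.
apply: le_trans (ler_wpM2r nS0 (_ : Cp <= K)) _; first by rewrite le_max lexx.
by apply: ler_wpM2l HxdagE; rewrite le_max ler01 orbT.
Qed.

Lemma approx_normV_le t : 0 < t <= t0 ->
  V (P t xdag) /\ nV (P t xdag) <= K * E * t `^ (theta - 1).
Proof.
move=> ht; have [_ [VP nVP]] := HProj ht HxdagS; split => //.
exact: le_trans nVP (Cp_le (powR_ge0 _ _)).
Qed.

Lemma approx_normU_le t : 0 < t <= t0 -> `|P t xdag - xdag| <= K * E * t `^ (a + theta).
Proof. by move=> ht; apply: le_trans (HProj ht HxdagS).1 (Cp_le (powR_ge0 _ _)). Qed.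

Lemma approx_normS_le t : 0 < t <= t0 -> nS (P t xdag - xdag) <= K * E.
Proof.
move=> ht; apply: le_trans (norm_onB HS HnS (HPS ht HxdagS) HxdagS) _.
have := HPnS ht HxdagS; have := Cp_le ler01; rewrite !mulr1; lra.
Qed.

Lemma approx_normX_le t : 0 < t <= t0 -> nX (P t xdag - xdag) <= L * (K * E) * t `^ theta.
Proof.
move=> /[dup] ht /andP[t_gt0 _]; have Sw := lin_subspaceB HS (HPS ht HxdagS) HxdagS.
have nSw : 0 <= nS (P t xdag - xdag) <= K * E * t `^ (theta - theta).
  by rewrite (norm_on_ge0 HnS Sw) subrr powRr0 mulr1 approx_normS_le.
have nUw : 0 <= `|P t xdag - xdag| <= K * E * t `^ (a + theta).
  by rewrite normr_ge0 approx_normU_le.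
apply: le_trans (interp_rate Ha Htheta t_gt0 (ltW HL) nSw nUw (Hinterp Sw)) _.
have at0 : a + theta != 0 by rewrite gt_eqF // ltr_wpDl.
rewrite -(mulrA L) -powRD; last by rewrite (gt_eqF KE_gt0) implybT.
by rewrite -mulrDl divff // powRr1 // ltW.
Qed.

Hypotheses (HXxdag : X xdag) (HPX : forall t, 0 < t <= t0 -> forall x, X x -> X (P t x)).
Hypothesis HA3 : (exists2 r, 0 < r & forall x, X x -> nX (x - xdag) < r -> D x) \/
  (forall t, 0 < t <= t0 -> D (P t xdag)).

Lemma approx_in_domain :
  exists2 t1, 0 < t1 <= t0 & forall t, 0 < t <= t1 -> D (P t xdag).
Proof.
case: HA3 => [[r r_gt0 ballD]|PD]; last by exists t0; rewrite ?Ht0 ?lexx.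
have [t1 /andP[t1_gt0 t1_le] small] := powR_small_near0 (mulr_gt0 HL KE_gt0) r_gt0 Htheta Ht0.
exists t1 => [|t /andP[t_gt0 t_le]]; first by rewrite t1_gt0.
have ht : 0 < t <= t0 by rewrite t_gt0 (le_trans t_le).
apply: ballD (HPX ht HXxdag) (le_lt_trans (approx_normX_le ht) _).
by apply: small; rewrite t_gt0.
Qed.

End SourceApproximation.

Theorem theorem2 (R : realType) (U Y : completeNormedModType R)
  (Xs : R -> set U) (ns : R -> U -> R)
  (F : U -> Y) (D : set U) (y : Y) (xdag : U)
  (nu m dmax CDP : R)
  (cU CU : R) (Bdag : set U)
  (t0 a : R) (P : R -> U -> U)
  (theta E : R)
  (* X := Xs 0 and V := Xs 1 are Banach spaces (more generally all X_s) *)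
  (HXs : forall s, 0 <= s <= 1 -> banach_sub (Xs s) (ns s))
  (* D(F) ⊆ X closed and convex *)
  (HDX : forall x, D x -> Xs 0 x)
  (HDclosed : forall (u : nat -> U) x, (forall k, D (u k)) -> Xs 0 x ->
      (fun k => ns 0 (u k - x)) @ \oo --> (0 : R) -> D x)
  (HDconvex : forall x z (l : R), D x -> D z -> 0 <= l <= 1 ->
      D (l *: x + (1 - l) *: z))
  (* F weakly sequentially continuous *)
  (HFweak : forall (u : nat -> U) x, (forall k, D (u k)) -> D x ->
      weak_cvg (Xs 0) (ns 0) u x ->
      weak_cvg [set: Y] (fun z : Y => `|z|) (fun k => F (u k)) (F x))
  (* x^dagger is the unique solution of F(x) = y in D(F) *)
  (Hxdag : D xdag) (HFxdag : F xdag = y)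
  (Huniq : forall x, D x -> F x = y -> x = xdag)
  (* V strictly finer than X; sublevel sets of ||.||_V^m weakly seq. precompact in X *)
  (HVfiner : ~ (exists C : R, forall x, Xs 1 x -> ns 1 x <= C * ns 0 x))
  (HVcompact : forall (M : R) (u : nat -> U), (forall k, Xs 1 (u k)) ->
      (forall k, powR (ns 1 (u k)) m <= M) ->
      exists phi : nat -> nat, {homo phi : i j / (i < j)%N >-> (i < j)%N} /\
        exists2 x, Xs 0 x & weak_cvg (Xs 0) (ns 0) (fun k => u (phi k)) x)
  (* parameters *)
  (Hnu : 1 <= nu) (Hm : 1 <= m) (Hdmax : 0 < dmax) (HCDP : 1 < CDP)
  (* existence of discrepancy-principle minimizers *)
  (HDP : forall (delta : R) (ydelta : Y), 0 < delta <= dmax -> `|ydelta - y| <= delta ->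
      exists2 kappa : R, 0 < kappa & exists2 x : U,
        is_minimizer F D (Xs 1) (ns 1) nu m kappa ydelta x &
        `|F x - ydelta| = CDP * delta)
  (* (A1) *)
  (HUproper : exists u : U, ~ Xs 0 u)
  (HcU : 0 < cU) (HcCU : cU <= CU)
  (HA1 : forall x, D x ->
      cU * `|x - xdag| <= `|F x - F xdag| /\ `|F x - F xdag| <= CU * `|x - xdag|)
  (HBdagX : forall x, Bdag x -> Xs 0 x)
  (HBdag : exists2 r : R, 0 < r &
      forall x, Xs 0 x -> ns 0 (x - xdag) < r -> Bdag x)
  (HFcont : forall x, Bdag x -> D x -> forall e : R, 0 < e ->
      exists2 eta : R, 0 < eta & forall z, Bdag z -> D z -> ns 0 (z - x) < eta ->
        `|F z - F x| < e)
  (* (A2) *)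
  (Ht0 : 0 < t0)
  (HPlin : forall t, 0 < t <= t0 -> forall (al be : R) (u v : U),
      P t (al *: u + be *: v) = al *: P t u + be *: P t v)
  (HPbdd : forall t, 0 < t <= t0 -> exists C : R, forall u, `|P t u| <= C * `|u|)
  (* (i) *)
  (HVX : exists C : R, forall x, Xs 1 x -> ns 0 x <= C * ns 1 x)
  (HXU : exists C : R, forall x, Xs 0 x -> `|x| <= C * ns 0 x)
  (* (ii) *)
  (Hemb : forall s t, 0 <= t -> t <= s -> s <= 1 ->
      (forall x, Xs s x -> Xs t x) /\
      exists C : R, forall x, Xs s x -> ns t x <= C * ns s x)
  (* (iii) *)
  (Ha : 0 <= a)
  (Hinterp : forall s r, 0 < s <= 1 -> 0 <= r < s ->
      exists2 L : R, 0 < L & forall x, Xs s x ->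
        ns r x <= L * powR (ns s x) ((r + a) / (a + s)) * powR `|x| ((s - r) / (a + s)))
  (* (iv) *)
  (HPinv : forall s t, 0 <= s <= 1 -> 0 < t <= t0 -> forall x, Xs s x -> Xs s (P t x))
  (HCP : forall s, 0 <= s <= 1 -> exists C : R,
      forall t, 0 < t <= t0 -> forall x, Xs s x -> ns s (P t x) <= C * ns s x)
  (HPcont : forall x, Xs 0 x -> forall t, 0 < t <= t0 -> forall e : R, 0 < e ->
      exists2 eta : R, 0 < eta & forall t', 0 < t' <= t0 -> `|t' - t| < eta ->
        ns 0 (P t' x - P t x) < e)
  (* (v) ; "C_Proj >= C_P + 1" is written as: C_Proj - 1 bounds all ||P_t||_{X_s -> X_s} *)
  (HProj : forall s, 0 < s < 1 -> exists CProj : R,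
      (forall t, 0 < t <= t0 -> forall x, Xs s x -> ns s (P t x) <= (CProj - 1) * ns s x) /\
      forall t, 0 < t <= t0 -> forall x, Xs s x ->
        `|P t x - x| <= CProj * powR t (a + s) * ns s x /\
        Xs 1 (P t x) /\ ns 1 (P t x) <= CProj * powR t (s - 1) * ns s x)
  (* (A3) *)
  (Htheta : 0 < theta < 1) (HE : 0 < E)
  (HxdagS : Xs theta xdag) (HxdagE : ns theta xdag <= E)
  (HA3 : (exists2 r : R, 0 < r & forall x, Xs 0 x -> ns 0 (x - xdag) < r -> D x)
         \/ (forall t, 0 < t <= t0 -> D (P t xdag))) :
  exists2 c : R, 0 < c & exists2 delta1 : R, 0 < delta1 &
    forall (delta : R) (ydelta : Y) (kappa : R) (x : U),
      0 < delta <= Num.min delta1 dmax -> `|ydelta - y| <= delta -> 0 < kappa ->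
      is_minimizer F D (Xs 1) (ns 1) nu m kappa ydelta x ->
      `|F x - ydelta| = CDP * delta ->
      ns 0 (x - xdag) <= c * powR delta (theta / (a + theta)).
Proof.
have /andP[theta_gt0 theta_lt1] := Htheta.
have i0 : 0 <= (0 : R) <= 1 by rewrite lexx ler01.
have i1 : 0 <= (1 : R) <= 1 by rewrite ler01 lexx.
have itheta : 0 <= theta <= 1 by rewrite (ltW theta_gt0) (ltW theta_lt1).
have [HX [HnX _]] := HXs 0 i0.
have [HV [HnV _]] := HXs 1 i1.
have [HS [HnS _]] := HXs theta itheta.
have [L1 L1_gt0 HI1] : exists2 L : R, 0 < L & forall x, Xs theta x ->
    ns 0 x <= L * ns theta x `^ ((0 + a) / (a + theta)) * `|x| `^ ((theta - 0) / (a + theta)).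
  by apply: Hinterp; rewrite ?lexx ?theta_gt0 ?(ltW theta_lt1).
have [L2 L2_gt0 HI2] : exists2 L : R, 0 < L & forall x, Xs 1 x ->
    ns 0 x <= L * ns 1 x `^ ((0 + a) / (a + 1)) * `|x| `^ ((1 - 0) / (a + 1)).
  by apply: Hinterp; rewrite ?lexx ?ltr01.
rewrite !add0r !subr0 in HI1 HI2.
have [Cp [HCpS HCp]] := HProj theta Htheta.
have [t1 Ht1 HD1] := approx_in_domain HS HnS Ha theta_gt0 L1_gt0 Ht0 HE HxdagS HxdagE
  (fun t => HPinv theta t itheta) HCpS HCp HI1 (HDX _ Hxdag) (fun t => HPinv 0 t i0) HA3.
have KE_gt0 : 0 < Num.max Cp 1 * E by rewrite mulr_gt0 // lt_max ltr01 orbT.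
have [c c_gt0 [delta1 delta1_gt0 rate]] := dp_minimizer_rate (z := fun t => P t xdag)
  HX HnX HV HnV HDX (HDX _ Hxdag) HFxdag HA1 (le_trans ler01 Hnu) (lt_le_trans ltr01 Hm) HCDP
  HcU (lt_le_trans HcU HcCU) Ha theta_gt0 (ltW L2_gt0) HI2 Ht1 KE_gt0 (mulr_gt0 L1_gt0 KE_gt0) HD1
  (approx_normV_le HnS HxdagS HxdagE HCp) (approx_normU_le HnS HxdagS HxdagE HCp)
  (approx_normX_le HS HnS Ha theta_gt0 L1_gt0 HE HxdagS HxdagE (fun t => HPinv theta t itheta)
    HCpS HCp HI1).
exists c => //; exists delta1 => // delta ydelta kappa x /andP[delta_gt0].
by rewrite le_min => /andP[delta_le _]; apply: rate; rewrite delta_gt0.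
Qed.
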